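(* Let $p(L,M,D;\mu=1)$ be a generative reasoning model, let $\alpha\in L$, and let $\Delta\subseteq L$ be finite with $[\![\Delta]\!]_p\neq\emptyset$. Then $p(\alpha\mid\Delta)=1$ if and only if $\Delta\mathrel{|\!\!\equiv}\alpha$.
   Context: Fix a multiset of data $\{d_1,\dots,d_K\}$ with $K\ge1$, and a propositional language $L$ over finitely many atoms, with set of models (truth assignments) $\mathcal M$. A function $m:\{d_1,\dots,d_K\}\to\mathcal M$ assigns to each datum the model it supports. The probability of a model $n$ is $p(n)=|\{k:m(d_k)=n\}|/K$. For a parameter $\mu\in[0,1]$ and $\alpha\in L$, set $p(\alpha\mid m)=\mu$ if $m$ satisfies $\alpha$ and $1-\mu$ otherwise. For finite $\Delta\subseteq L$, set $p(\Delta\mid m)=\prod_{\beta\in\Delta}p(\beta\mid m)$, which is $1$ for empty $\Delta$. Define $$p(\alpha\mid\Delta)=\frac{\sum_{m}p(\alpha\mid m)p(\Delta\mid m)p(m)}{\sum_m p(\Delta\mid m)p(m)}.$$ This is the generative reasoning model $p(L,M,D;\mu)$. For $\mu=1$ the expression is evaluated at $\mu=1$, and it is undefined when the denominator is $0$. Notation: - $[\![\Delta]\!]$ is the set of models satisfying all formulas in $\Delta$, and $[\![\alpha]\!]=[\![\{\alpha\}]\!]$. - $[\![\Delta]\!]_p=\{m\in[\![\Delta]\!]:p(m)\neq0\}$. - $\Delta\mathrel{|\!\!\equiv}\alpha$ (empirical consequence) means $[\![\Delta]\!]_p\subseteq[\![\alpha]\!]_p$. *)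

From mathcomp Require Import all_boot all_order all_algebra.
Set Implicit Arguments. Unset Strict Implicit. Unset Printing Implicit Defensive.
Import Order.TTheory GRing.Theory Num.Theory.
Local Open Scope ring_scope.

Inductive pform (A : Type) : Type :=
  | fAtom of A
  | fTrue
  | fFalse
  | fNot of pform A
  | fAnd of pform A & pform A
  | fOr of pform A & pform A
  | fImp of pform A & pform A.
Arguments fTrue {A}. Arguments fFalse {A}.

Definition model (A : finType) := {ffun A -> bool}.

Fixpoint sat (A : finType) (n : model A) (f : pform A) : bool :=
  match f with
  | fAtom x => n x
  | fTrue => true
  | fFalse => false
  | fNot g => ~~ sat n g
  | fAnd g h => sat n g && sat n h
  | fOr g h => sat n g || sat n h
  | fImp g h => sat n g ==> sat n h
  end.

(* Data d_1..d_K are indexed by 'I_K; m : 'I_K -> model A assigns to each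
   datum the model it supports.  p(n) = |{k : m(d_k) = n}| / K. *)
Definition prob (R : numFieldType) (A : finType) (K : nat)
  (m : 'I_K -> model A) (n : model A) : R :=
  #|[set k | m k == n]|%:R / K%:R.

Definition p_form (R : numFieldType) (A : finType) (mu : R) (a : pform A)
  (n : model A) : R := if sat n a then mu else 1 - mu.

Definition p_set (R : numFieldType) (A : finType) (mu : R) (D : seq (pform A))
  (n : model A) : R := \prod_(b <- D) p_form mu b n.

Definition gen_prob (R : numFieldType) (A : finType) (K : nat) (mu : R)
  (m : 'I_K -> model A) (a : pform A) (D : seq (pform A)) : R :=
  (\sum_(n : model A) p_form mu a n * p_set mu D n * prob R m n) /
  (\sum_(n : model A) p_set mu D n * prob R m n).

Definition models_p (R : numFieldType) (A : finType) (K : nat)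
  (m : 'I_K -> model A) (D : seq (pform A)) : {set model A} :=
  [set n | all (sat n) D & prob R m n != 0].

Definition emp_cons (R : numFieldType) (A : finType) (K : nat)
  (m : 'I_K -> model A) (D : seq (pform A)) (a : pform A) : bool :=
  models_p R m D \subset models_p R m [:: a].

From mathcomp Require Import all_boot all_order all_algebra.
Import Order.TTheory GRing.Theory Num.Theory.
Set Implicit Arguments. Unset Strict Implicit. Unset Printing Implicit Defensive.
Local Open Scope ring_scope.

(* At mu = 1 the likelihoods p(alpha | n) and p(Delta | n) are the indicators of
   n |= alpha and n |= Delta, so p(alpha | Delta) is the mean of the indicator of
   alpha under the weights p(n) restricted to [[Delta]].  A weighted mean of 0/1
   values is 1 exactly when the value is 1 at every point of nonzero weight, and
   the points of nonzero weight are precisely [[Delta]]_p. *)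

Lemma weighted_mean_bool_eq1 (R : numFieldType) (I : finType) (w : I -> R)
    (f : pred I) :
  (forall i, 0 <= w i) -> \sum_i w i != 0 ->
  (\sum_i (f i)%:R * w i) / \sum_i w i = 1 <-> (forall i, w i != 0 -> f i).
Proof.
move=> w_ge0 sumw_neq0.
have -> : \sum_i (f i)%:R * w i = \sum_i w i - \sum_i (~~ f i)%:R * w i.
  rewrite -sumrB; apply: eq_bigr => i _.
  by case: (f i); rewrite ?mul1r ?mul0r ?subr0 ?subrr.
apply: iff_trans (rwP eqP) _.
rewrite mulrBl divff // subr_eq addrC -subr_eq subrr eq_sym mulf_eq0 invr_eq0.
rewrite (negPf sumw_neq0) orbF psumr_eq0 => [|i _]; last by rewrite mulr_ge0 ?ler0n.
split=> [/allP nf_w0 i wi_neq0 | f_w].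
  apply: contraNT wi_neq0 => fNi.
  by have := nf_w0 i (mem_index_enum _); rewrite fNi mul1r.
by apply/allP => i _; have [-> | /f_w ->] := eqVneq (w i) 0; rewrite ?mulr0 ?mul0r ?eqxx.
Qed.

Section GenerativeModelAtOne.

Context {R : numFieldType}.
Variables (A : finType) (K : nat) (m : 'I_K -> model A).

Lemma p_form1 (a : pform A) (n : model A) : p_form (1 : R) a n = (sat n a)%:R.
Proof. by rewrite /p_form; case: (sat n a); rewrite ?subrr. Qed.

Lemma p_set1 (D : seq (pform A)) (n : model A) :
  p_set (1 : R) D n = (all (sat n) D)%:R.
Proof.
elim: D => [|b D IH]; first by rewrite /p_set big_nil.
by rewrite /p_set big_cons -/(p_set _ D n) IH p_form1 -natrM mulnb.
Qed.

Lemma prob_ge0 (n : model A) : 0 <= prob R m n.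
Proof. by rewrite divr_ge0 ?ler0n. Qed.

Definition weight (D : seq (pform A)) (n : model A) : R := p_set 1 D n * prob R m n.

Lemma weight_ge0 (D : seq (pform A)) (n : model A) : 0 <= weight D n.
Proof. by rewrite /weight p_set1 mulr_ge0 ?ler0n ?prob_ge0. Qed.

Lemma weight_neq0 (D : seq (pform A)) (n : model A) :
  (weight D n != 0) = (n \in models_p R m D).
Proof. by rewrite /weight p_set1 inE mulf_eq0 negb_or pnatr_eq0 eqb0 negbK. Qed.

Lemma gen_prob1 (a : pform A) (D : seq (pform A)) :
  gen_prob 1 m a D = (\sum_n (sat n a)%:R * weight D n) / \sum_n weight D n.
Proof.
rewrite /gen_prob /weight; congr (_ / _).
by apply: eq_bigr => n _; rewrite p_form1 mulrA.
Qed.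

Lemma sum_weight_neq0 (D : seq (pform A)) :
  models_p R m D != set0 -> \sum_n weight D n != 0.
Proof.
case/set0Pn => n0 n0D; rewrite psumr_neq0 => [|n _]; last exact: weight_ge0.
by apply/hasP; exists n0; rewrite ?mem_index_enum // lt0r weight_neq0 n0D weight_ge0.
Qed.

Lemma emp_consP (D : seq (pform A)) (a : pform A) :
  reflect (forall n, n \in models_p R m D -> sat n a) (emp_cons R m D a).
Proof.
apply: (iffP subsetP) => [D_a n nD | D_a n nD]; last first.
  by move: (nD); rewrite !inE /= andbT D_a // => /andP[_ ->].
by move: (D_a n nD); rewrite inE /= andbT => /andP[].
Qed.

End GenerativeModelAtOne.

Theorem corollary2 (R : realFieldType) (A : finType) (K : nat)
  (hK : (0 < K)%N) (m : 'I_K -> model A) (a : pform A) (D : seq (pform A)) :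
  models_p R m D != set0 ->
  (gen_prob 1 m a D = 1 :> R <-> emp_cons R m D a).
Proof.
move=> /sum_weight_neq0 sum_weight_neq0; rewrite gen_prob1.
apply: iff_trans (weighted_mean_bool_eq1 _ (weight_ge0 m D) sum_weight_neq0) _.
apply: iff_trans (rwP (emp_consP m D a)).
by split=> D_a n; [rewrite -weight_neq0 | rewrite weight_neq0]; apply: D_a.
Qed.
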